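(* Let $G=K_{r_1,\dots,r_k}$ with $|V(G)|$ odd and partition sets $X_1,\dots,X_k$, and let $H$ be a good bisection of $G$ with partition sets $V_1,V_2$ such that $|V_1|=|V_2|+1$. Let $\mathcal X_0'$ be the set of those $X_i$ that cross $H$, have $|X_i|$ even, and satisfy $\big||X_i\cap V_1|-|X_i\cap V_2|\big|=2$; let $\mathcal X_1$ be the set of those $X_i$ that cross $H$ and have $|X_i|$ odd. Let $W_1=\bigcup_{X_i\in\mathcal X_1}X_i$, $W_0=\bigcup_{X_i\in\mathcal X_0'}X_i$, $t=|\mathcal X_1|$, $t'=|\mathcal X_0'|$. Then (i) $|W_1\cap V_1|-|W_1\cap V_2|=t$; (ii) $|W_0\cap V_1|-|W_0\cap V_2|=2t'$; (iii) $|\overline{W_1\cup W_0}\cap V_1|-|\overline{W_1\cup W_0}\cap V_2|=-(t+2t'-1)$.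
   Context: A bisection of a graph $G$ is a bipartite spanning subgraph $H$ of $G$ with partition sets $V_1,V_2$ (every edge of $H$ joins $V_1$ and $V_2$) with $||V_1|-|V_2||\le 1$. It is good if $2d_H(v)\ge d_G(v)-1$ for every $v\in V(G)$. For $W\subseteq V(G)$, $\overline{W}=V(G)\setminus W$. A partition set $X_i$ crosses $H$ if $X_i\cap V_1\neq\emptyset$ and $X_i\cap V_2\ne\emptyset$. *)

From HB Require Import structures.
From mathcomp Require Import all_boot all_order all_algebra.
Set Implicit Arguments. Unset Strict Implicit. Unset Printing Implicit Defensive.
Import Order.TTheory GRing.Theory Num.Theory.

Section Defs.
Variable T : finType.

(* Complete multipartite graph K_{r_1,...,r_k} on vertex set T, given by the
   part map p : T -> 'I_k; partition set X_i = part p i. *)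
Definition part (k : nat) (p : T -> 'I_k) (i : 'I_k) : {set T} := [set v | p v == i].
Definition mp_adj (k : nat) (p : T -> 'I_k) : rel T := fun u v => p u != p v.

Definition degree (e : rel T) (v : T) : nat := #|[set u | e v u]|.

Definition is_bisection (G H : rel T) (V1 V2 : {set T}) : Prop :=
  [/\ (forall u v, H u v -> G u v),
      (forall u v, H u v = H v u),
      (forall u v, H u v ->
          (u \in V1 /\ v \in V2) \/ (u \in V2 /\ v \in V1)),
      V1 :&: V2 = set0 /\ V1 :|: V2 = setT &
      (Num.norm (#|V1|%:Z - #|V2|%:Z) <= 1)%R].

Definition good_bisection (G H : rel T) (V1 V2 : {set T}) : Prop :=
  is_bisection G H V1 V2 /\
  forall v, ((degree G v)%:Z - 1 <= 2 * (degree H v)%:Z)%R.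

Definition crosses (X V1 V2 : {set T}) : bool :=
  (X :&: V1 != set0) && (X :&: V2 != set0).
End Defs.

From HB Require Import structures.
From mathcomp Require Import all_boot all_order all_algebra.
From mathcomp Require Import zify.
Import Order.TTheory GRing.Theory Num.Theory.
Set Implicit Arguments. Unset Strict Implicit. Unset Printing Implicit Defensive.

(* In K_{r_1,...,r_k} a vertex v of the part X has degree |V(G)| - |X|, while
   in a bisection its H-degree is at most the number of vertices on the other
   side outside X. Goodness at a vertex of X on each side then forces
   |X ∩ V2| <= |X ∩ V1| <= |X ∩ V2| + 2 for every crossing part X when
   |V1| = |V2| + 1. Parity pins the odd crossing parts to a surplus of 1, the
   parts of X0' have surplus 2 by definition, and (iii) is what is left of the
   global surplus |V1| - |V2| = 1. *)

Section MultipartiteParts.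
Variables (T : finType) (k : nat) (p : T -> 'I_k).

Lemma mem_bigcup_part (S : {set 'I_k}) x :
  (x \in \bigcup_(i in S) part p i) = (p x \in S).
Proof.
apply/bigcupP/idP => [[i iS]|pxS]; first by rewrite inE => /eqP ->.
by exists (p x) => //; rewrite inE.
Qed.

Lemma card_bigcup_partI (S : {set 'I_k}) (A : {set T}) :
  #|(\bigcup_(i in S) part p i) :&: A| = \sum_(i in S) #|part p i :&: A|.
Proof.
rewrite -sum1_card (partition_big p (mem S)) /=; last first.
  by move=> x; rewrite inE mem_bigcup_part => /andP[].
apply: eq_bigr => j jS; rewrite -sum1_card; apply: eq_bigl => x.
rewrite !inE mem_bigcup_part.
by case: (p x =P j) => [->|]; rewrite ?jS ?andbT ?andbF.
Qed.

Lemma card_bigcup_part_surplus (S : {set 'I_k}) (A B : {set T}) c :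
  {in S, forall i, #|part p i :&: A| = #|part p i :&: B| + c}%N ->
  #|(\bigcup_(i in S) part p i) :&: A|
    = (#|(\bigcup_(i in S) part p i) :&: B| + #|S| * c)%N.
Proof.
move=> surplus; rewrite !card_bigcup_partI -sum_nat_const -big_split /=.
exact: eq_bigr.
Qed.

Lemma degree_mp_adj v : degree (mp_adj p) v = (#|T| - #|part p (p v)|)%N.
Proof.
rewrite /degree (_ : [set u | _] = ~: part p (p v)); last first.
  by apply/setP => u; rewrite !inE /mp_adj eq_sym.
by rewrite cardsCs setCK.
Qed.

End MultipartiteParts.

Section Bisections.
Variables (T : finType) (G H : rel T).

Lemma is_bisection_sym (V1 V2 : {set T}) :
  is_bisection G H V1 V2 -> is_bisection G H V2 V1.
Proof.
case=> sub sym side [dis cov] bal; split=> //.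
- by move=> u v /side; tauto.
- by rewrite setIC setUC.
- by rewrite -normrN opprB.
Qed.

Lemma good_bisection_sym (V1 V2 : {set T}) :
  good_bisection G H V1 V2 -> good_bisection G H V2 V1.
Proof. by case=> /is_bisection_sym. Qed.

Variables (V1 V2 : {set T}).
Hypothesis bisH : is_bisection G H V1 V2.

Lemma card_bisectionI (X : {set T}) : #|X| = (#|X :&: V1| + #|X :&: V2|)%N.
Proof.
case: bisH => _ _ _ [dis cov] _.
rewrite -cardsUI -setIUr cov setIT setIACA setIid dis setI0 cards0.
by rewrite addn0.
Qed.

Lemma degree_bisection_le v :
  v \in V1 -> (degree H v <= #|[set u in V2 | G v u]|)%N.
Proof.
case: bisH => sub _ side [dis _] _ vV1.
apply/subset_leq_card/subsetP => u; rewrite !inE => Hvu.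
rewrite sub // andbT.
case: (side _ _ Hvu) => [[_ //]|[vV2 _]].
by have := in_set0 v; rewrite -dis inE vV1 vV2.
Qed.

End Bisections.

Section GoodBisectionsOfMultipartiteGraphs.
Variables (T : finType) (k : nat) (p : T -> 'I_k) (H : rel T).

Lemma good_part_balance (V1 V2 : {set T}) v :
  good_bisection (mp_adj p) H V1 V2 -> v \in V1 ->
  (#|part p (p v) :&: V2| + #|V1|
     <= #|part p (p v) :&: V1| + #|V2| + 1)%N.
Proof.
case=> bisH goodH vV1.
have sideV2 : [set u in V2 | mp_adj p v u] = V2 :\: part p (p v).
  by apply/setP => u; rewrite !inE /mp_adj eq_sym andbC.
have := degree_bisection_le bisH vV1; rewrite sideV2 cardsD (setIC V2).
have := goodH v; rewrite degree_mp_adj.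
have cardT : #|T| = (#|V1| + #|V2|)%N.
  by rewrite -cardsT (card_bisectionI bisH) !setTI.
have cardX := card_bisectionI bisH (part p (p v)).
have le_XV2 : (#|part p (p v) :&: V2| <= #|V2|)%N.
  by rewrite subset_leq_card ?subsetIr.
have le_XT : (#|part p (p v)| <= #|T|)%N by apply: max_card.
lia.
Qed.

Lemma crossing_part_balance (V1 V2 : {set T}) i :
  good_bisection (mp_adj p) H V1 V2 -> #|V1| = (#|V2| + 1)%N ->
  crosses (part p i) V1 V2 ->
  (#|part p i :&: V2| <= #|part p i :&: V1| <= #|part p i :&: V2| + 2)%N.
Proof.
move=> goodH sizeV /andP[/set0Pn[v1 /setIP[v1i v1V1]] /set0Pn[v2 /setIP[v2i v2V2]]].
move: v1i v2i; rewrite !inE => /eqP pv1 /eqP pv2.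
have := good_part_balance goodH v1V1.
have := good_part_balance (good_bisection_sym goodH) v2V2.
rewrite pv1 pv2; lia.
Qed.

Lemma odd_crossing_part_surplus (V1 V2 : {set T}) i :
  good_bisection (mp_adj p) H V1 V2 -> #|V1| = (#|V2| + 1)%N ->
  crosses (part p i) V1 V2 -> odd #|part p i| ->
  #|part p i :&: V1| = (#|part p i :&: V2| + 1)%N.
Proof.
move=> goodH sizeV cross.
have /andP[lo hi] := crossing_part_balance goodH sizeV cross.
rewrite (card_bisectionI goodH.1) oddD.
have [->|[->|->]] : #|part p i :&: V1| = #|part p i :&: V2|
    \/ #|part p i :&: V1| = (#|part p i :&: V2| + 1)%N
    \/ #|part p i :&: V1| = (#|part p i :&: V2| + 2)%N by lia.
- by rewrite addbb.
- by [].
- by rewrite addn2 !oddS negbK addbb.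
Qed.

Lemma crossing_part_surplus2 (V1 V2 : {set T}) i :
  good_bisection (mp_adj p) H V1 V2 -> #|V1| = (#|V2| + 1)%N ->
  crosses (part p i) V1 V2 ->
  (`|#|part p i :&: V1|%:Z - #|part p i :&: V2|%:Z| == 2%:Z)%R ->
  #|part p i :&: V1| = (#|part p i :&: V2| + 2)%N.
Proof.
move=> goodH sizeV cross.
have /andP[lo _] := crossing_part_balance goodH sizeV cross.
rewrite ger0_norm ?subr_ge0 ?lez_nat // => /eqP; lia.
Qed.

End GoodBisectionsOfMultipartiteGraphs.

Lemma card_setCI (T : finType) (W A : {set T}) :
  #|~: W :&: A| = (#|A| - #|W :&: A|)%N.
Proof. by rewrite setIC -setDE cardsD setIC. Qed.

Local Open Scope ring_scope.

Theorem lemma3p2 (T : finType) (k : nat) (p : T -> 'I_k)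
  (Hpart : forall i : 'I_k, (0 < #|part p i|)%N)
  (Hodd : odd #|T|)
  (H : rel T) (V1 V2 : {set T})
  (Hgood : good_bisection (mp_adj p) H V1 V2)
  (Hsize : #|V1| = (#|V2| + 1)%N) :
  let X0' := [set i : 'I_k | [&& crosses (part p i) V1 V2,
                 ~~ odd #|part p i| &
                 (Num.norm (#|part p i :&: V1|%:Z - #|part p i :&: V2|%:Z)%R == 2%:Z)]] in
  let X1 := [set i : 'I_k | crosses (part p i) V1 V2 && odd #|part p i|] in
  let W1 := \bigcup_(i in X1) part p i in
  let W0 := \bigcup_(i in X0') part p i in
  let t := #|X1| in
  let t' := #|X0'| in
  [/\ (#|W1 :&: V1|%:Z - #|W1 :&: V2|%:Z = t%:Z)%R,
      (#|W0 :&: V1|%:Z - #|W0 :&: V2|%:Z = 2 * t'%:Z)%R &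
      (#|~: (W1 :|: W0) :&: V1|%:Z - #|~: (W1 :|: W0) :&: V2|%:Z
         = - (t%:Z + 2 * t'%:Z - 1))%R].
Proof.
move=> X0' X1 W1 W0 t t'.
have surplusW1 : #|W1 :&: V1| = (#|W1 :&: V2| + t * 1)%N.
  apply: (card_bigcup_part_surplus (S := X1)) => i; rewrite inE => /andP[cross oddX].
  exact: odd_crossing_part_surplus Hgood Hsize cross oddX.
have surplusW0 : #|W0 :&: V1| = (#|W0 :&: V2| + t' * 2)%N.
  apply: (card_bigcup_part_surplus (S := X0')) => i; rewrite inE => /and3P[cross _ norm2].
  exact: crossing_part_surplus2 Hgood Hsize cross norm2.
have disjW : W1 :&: W0 = set0.
  apply/setP => x; rewrite !inE !mem_bigcup_part !inE.
  by apply/negP => /andP[/andP[_ oddX] /and3P[_ evenX _]]; rewrite oddX in evenX.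
have cardWI A : #|(W1 :|: W0) :&: A| = (#|W1 :&: A| + #|W0 :&: A|)%N.
  by rewrite setIUl -cardsUI setIACA disjW set0I cards0 addn0.
have leWI A : (#|(W1 :|: W0) :&: A| <= #|A|)%N by rewrite subset_leq_card ?subsetIr.
have := leWI V1; have := leWI V2.
rewrite !card_setCI !cardWI; clear -surplusW1 surplusW0 Hsize; split; lia.
Qed.
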